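(* Let $n\ge2$ be an integer. (a) $\mathrm{Sym}^n\mathbb{R}[e_1]\cap \mathrm{Sym}^n\mathbb{H}\cdot\triangle^{(n)}_\mathbb{H}=\{0\}$. (b) $\mathrm{Sym}^n\mathbb{H}\cap \mathrm{Sym}^n\mathbb{O}\cdot\triangle^{(n)}_\mathbb{O}=\{0\}$.
   Context: $\mathbb{O}$ is the Cayley octonion algebra over $\mathbb{R}$ with basis $e_0=1,e_1,\dots,e_7$; $1,e_1,e_2,e_3$ span the quaternion subalgebra $\mathbb{H}$ ($e_i^2=-1$, $e_1e_2=-e_2e_1=e_3$, $e_2e_3=-e_3e_2=e_1$, $e_3e_1=-e_1e_3=e_2$), $\mathbb{O}=\mathbb{H}\oplus\mathbb{H}e_4$ is the Cayley–Dickson double with $e_4^2=-1$, $e_{i+4}=e_ie_4$ ($i=1,2,3$), $(x+ye_4)(z+we_4)=(xz-\bar wy)+(wx+y\bar z)e_4$; $\mathbb{R}[e_1]$ is the subalgebra spanned by $1,e_1$. For $\mathcal A\in\{\mathbb{R}[e_1],\mathbb{H},\mathbb{O}\}$, $\mathcal A^{\otimes n}$ is the $n$-fold tensor power over $\mathbb{R}$ with componentwise multiplication, $\mathfrak S_n$ acts by permuting factors, $x^\vee=\frac1{n!}\sum_{\sigma\in\mathfrak S_n}\sigma(x)$, and $\mathrm{Sym}^n\mathcal A$ is the subalgebra of fixed tensors; $\mathrm{Sym}^n\mathbb{R}[e_1]\subset\mathrm{Sym}^n\mathbb{H}\subset\mathrm{Sym}^n\mathbb{O}$. For $\mathcal C\in\{\mathbb{H},\mathbb{O}\}$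 of dimension $d$, $\triangle_{\mathcal C}=\frac1d\sum_{i=0}^{d-1}e_i\otimes e_i$ and $\triangle^{(n)}_{\mathcal C}=(\triangle_{\mathcal C}\otimes1^{\otimes(n-2)})^\vee$; $\mathrm{Sym}^n\mathcal C\cdot\triangle^{(n)}_{\mathcal C}=\{r\triangle^{(n)}_{\mathcal C}: r\in\mathrm{Sym}^n\mathcal C\}$. *)

From HB Require Import structures.
From mathcomp Require Import all_boot all_order all_algebra.
From mathcomp Require Import fingroup perm.
From mathcomp Require Import reals.
Set Implicit Arguments. Unset Strict Implicit. Unset Printing Implicit Defensive.
Import Order.TTheory GRing.Theory Num.Theory.
Local Open Scope ring_scope.

Section Defs.
Variable R : realType.

(** Quaternions as coordinate vectors w.r.t. 1,e1,e2,e3. *)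
Definition qmul (a b : 'I_4 -> R) : 'I_4 -> R := fun k =>
  let a0 := a (inord 0) in let a1 := a (inord 1) in
  let a2 := a (inord 2) in let a3 := a (inord 3) in
  let b0 := b (inord 0) in let b1 := b (inord 1) in
  let b2 := b (inord 2) in let b3 := b (inord 3) in
  match val k with
  | 0 => a0 * b0 - a1 * b1 - a2 * b2 - a3 * b3
  | 1 => a0 * b1 + a1 * b0 + a2 * b3 - a3 * b2
  | 2 => a0 * b2 - a1 * b3 + a2 * b0 + a3 * b1
  | _ => a0 * b3 + a1 * b2 - a2 * b1 + a3 * b0
  end.

Definition qconj (a : 'I_4 -> R) : 'I_4 -> R :=
  fun k => if val k == 0%N then a k else - a k.

Definition qadd (a b : 'I_4 -> R) : 'I_4 -> R := fun k => a k + b k.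
Definition qsub (a b : 'I_4 -> R) : 'I_4 -> R := fun k => a k - b k.

(** Octonions as coordinate vectors w.r.t. e_0..e_7, with the Cayley-Dickson
    product (x + y e4)(z + w e4) = (xz - conj(w) y) + (w x + y conj(z)) e4,
    where coordinate 4+i of an octonion is coordinate i of its y-part
    (e_{i+4} = e_i e_4). *)
Definition lo (x : 'I_8 -> R) : 'I_4 -> R := fun i => x (inord i).
Definition hi (x : 'I_8 -> R) : 'I_4 -> R := fun i => x (inord (4 + i)).

Definition omul (u v : 'I_8 -> R) : 'I_8 -> R := fun k =>
  let x := lo u in let y := hi u in let z := lo v in let w := hi v in
  if (val k < 4)%N then qsub (qmul x z) (qmul (qconj w) y) (inord k)
  else qadd (qmul w x) (qmul y (qconj z)) (inord (val k - 4)).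

Definition obasis (i : 'I_8) : 'I_8 -> R := fun t => if t == i then 1 else 0.

Definition gam (i j k : 'I_8) : R := omul (obasis i) (obasis j) k.

(** n-fold tensor power of O, as coefficient functions on multi-indices
    (basis e_{I 0} (x) ... (x) e_{I (n-1)}). *)
Definition tens (n : nat) := {ffun 'I_n -> 'I_8} -> R.

Definition tmul n (x y : tens n) : tens n := fun K =>
  \sum_(I : {ffun 'I_n -> 'I_8}) \sum_(J : {ffun 'I_n -> 'I_8})
     x I * y J * \prod_(t < n) gam (I t) (J t) (K t).

Definition tact n (s : {perm 'I_n}) (x : tens n) : tens n :=
  fun I => x [ffun t => I (s t)].

Definition symz n (x : tens n) : tens n :=
  fun I => (n`!%:R)^-1 * \sum_(s : {perm 'I_n}) tact s x I.

Definition is_sym n (x : tens n) : Prop := forall s : {perm 'I_n}, tact s x = x.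

(** x lies in A^{(x)n} where A is spanned by e_0,...,e_{d-1}
    (d = 2 : R[e1], d = 4 : H, d = 8 : O) *)
Definition supported n (d : nat) (x : tens n) : Prop :=
  forall I : {ffun 'I_n -> 'I_8}, (exists t, (d <= val (I t))%N) -> x I = 0.

Definition SymA n (d : nat) (x : tens n) : Prop := is_sym x /\ supported d x.

(** triangle_C (x) 1^{(x)(n-2)}, with triangle_C = (1/d) sum_{i<d} e_i (x) e_i *)
Definition delta0 n (d : nat) : tens n := fun I =>
  if [forall t : 'I_n, (2 <= val t)%N ==> (I t == ord0)] &&
     [forall s : 'I_n, forall t : 'I_n,
        ((val s == 0%N) && (val t == 1%N)) ==> ((I s == I t) && (val (I s) < d)%N)]
  then (d%:R)^-1 else 0.

Definition deltan n (d : nat) : tens n := symz (@delta0 n d).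

End Defs.
Arguments delta0 R n d : clear implicits.
Arguments deltan R n d : clear implicits.

From Pilot Require Import Defs.
From HB Require Import structures.
From mathcomp Require Import all_boot all_order all_algebra.
From mathcomp Require Import fingroup perm.
From mathcomp Require Import reals.
From mathcomp Require Import ring lra zify.
From mathcomp Require boolp.
Import Order.TTheory GRing.Theory Num.Theory.
Local Open Scope ring_scope.
Set Implicit Arguments. Unset Printing Implicit Defensive.

(* Let C be H or O, d = dim C, and let r lie in Sym^n C.  Summed over i < d, the
   tensors e_u e_i (x) e_v e_i + e_v e_i (x) e_u e_i equal 2 [u = v] d Delta_C;
   hence r (Delta_C (x) 1) = Delta_C (x) c, where c is the contraction of r against
   Delta_C in its first two factors, and r Delta^(n)_C is the symmetrization of
   Delta_C (x) c.  Now suppose r Delta^(n)_C lies in Sym^n A for a smaller A, and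
   pick a basis index w of C outside A.  At a multi-index L beginning with (w, w)
   the coefficient of r Delta^(n)_C vanishes; it is a positive multiple of c(L)
   plus multiples of values of c at multi-indices with two more entries equal to
   w.  Induction on the number of entries different from w gives c = 0, hence
   r Delta^(n)_C = 0. *)

(* e_0, ..., e_(d-1) span a composition subalgebra (R, C, H, O) exactly for these d. *)
Definition cd_dim (d : nat) : bool := d \in [:: 1; 2; 4; 8]%N.

(* Row [u], column [i] holds [(k, b)] with [e_u e_i = (-1)^b e_k]. *)
Definition oct_table : seq (seq (nat * bool)) :=
 [:: [:: (0,false); (1,false); (2,false); (3,false); (4,false); (5,false); (6,false); (7,false)];
     [:: (1,false); (0,true);  (3,false); (2,true);  (5,false); (4,true);  (7,true);  (6,false)];
     [:: (2,false); (3,true);  (0,true);  (1,false); (6,false); (7,false); (4,true);  (5,true)];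
     [:: (3,false); (2,false); (1,true);  (0,true);  (7,false); (6,true);  (5,false); (4,true)];
     [:: (4,false); (5,true);  (6,true);  (7,true);  (0,true);  (1,false); (2,false); (3,false)];
     [:: (5,false); (4,false); (7,true);  (6,false); (1,true);  (0,true);  (3,true);  (2,false)];
     [:: (6,false); (7,false); (4,false); (5,true);  (2,true);  (3,false); (0,true);  (1,true)];
     [:: (7,false); (6,true);  (5,false); (4,false); (3,true);  (2,true);  (1,false); (0,true)]].

Definition gamz (u i k : nat) : int :=
  let e := nth (0, false) (nth [::] oct_table u) i in
  if k == e.1 then (if e.2 then -1 else 1) else 0.

Lemma gamE (R : realType) (u i k : 'I_8) : gam R u i k = (gamz u i k)%:~R.
Proof.
have inordE (m : nat) (x : 'I_8) : (m < 8)%N -> (inord m == x) = (m == val x).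
  by move=> lt_m8; rewrite -val_eqE /= inordK.
case: k => [[|[|[|[|[|[|[|[|//]]]]]]]] ?];
rewrite /gam /omul /obasis /lo /hi /qsub /qadd /qmul /qconj /= !inordK // !inordE //
  ?(subSS, subn0, addnS, addn0);
case: u => [[|[|[|[|[|[|[|[|//]]]]]]]] ?]; case: i => [[|[|[|[|[|[|[|[|//]]]]]]]] ?];
rewrite /gamz /=; ring.
Qed.

Lemma gam_unitr (R : realType) (u k : 'I_8) : gam R u ord0 k = (u == k)%:R.
Proof.
rewrite gamE -val_eqE; case: u => [[|[|[|[|[|[|[|[|//]]]]]]]] ?];
by rewrite /gamz /= eq_sym; case: eqP.
Qed.

Lemma cd_dim_le8 d : cd_dim d -> (d <= 8)%N.
Proof. by rewrite /cd_dim !inE => /or4P[] /eqP ->. Qed.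

Lemma cd_dim_gt0 d : cd_dim d -> (0 < d)%N.
Proof. by rewrite /cd_dim !inE => /or4P[] /eqP ->. Qed.

Definition pair_sumz (d u v k0 k1 : nat) : int :=
  foldr (fun i acc => gamz u i k0 * gamz v i k1 + gamz v i k0 * gamz u i k1 + acc)
    0 (iota 0 d).

Definition pair_table_ok (d : nat) : bool :=
  all (fun u => all (fun v => all (fun k0 => all (fun k1 =>
    pair_sumz d u v k0 k1 == 2 * ((u == v) && (k0 == k1) && (k0 < d)%N)%:Z)
    (iota 0 8)) (iota 0 8)) (iota 0 d)) (iota 0 d).

Lemma pair_sumzE d u v k0 k1 :
  cd_dim d -> (u < d)%N -> (v < d)%N -> (k0 < 8)%N -> (k1 < 8)%N ->
  pair_sumz d u v k0 k1 = 2 * ((u == v) && (k0 == k1) && (k0 < d)%N)%:Z.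
Proof.
move=> cd_d lt_ud lt_vd lt_k08 lt_k18.
have : pair_table_ok d by move: cd_d; rewrite /cd_dim !inE => /or4P[] /eqP ->; vm_compute.
rewrite /pair_table_ok => /allP/(_ u); rewrite mem_iota lt_ud => /(_ isT).
move=> /allP/(_ v); rewrite mem_iota lt_vd => /(_ isT).
move=> /allP/(_ k0); rewrite mem_iota lt_k08 => /(_ isT).
by move=> /allP/(_ k1); rewrite mem_iota lt_k18 => /(_ isT) /eqP.
Qed.

Lemma gam_pair (R : realType) d (u v k0 k1 : 'I_8) :
  cd_dim d -> (u < d)%N -> (v < d)%N ->
  \sum_(i < 8 | (i < d)%N) (gam R u i k0 * gam R v i k1 + gam R v i k0 * gam R u i k1) =
  2 * ((u == v) && (k0 == k1) && (k0 < d)%N)%:R.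
Proof.
move=> cd_d lt_ud lt_vd.
pose F i := gamz u i k0 * gamz v i k1 + gamz v i k0 * gamz u i k1.
have : pair_sumz d u v k0 k1 = \sum_(i < 8 | (i < d)%N) F i.
  rewrite -(big_ord_widen _ F (cd_dim_le8 _ cd_d)) -(big_mkord xpredT F).
  by rewrite unlock /index_iota subn0.
rewrite pair_sumzE // => /(congr1 (fun z : int => z%:~R : R)).
rewrite rmorph_sum rmorphM /= => ->.
by apply: eq_bigr => i _; rewrite /F !gamE rmorphD !rmorphM.
Qed.

Lemma contract_gam_pair (R : realType) d (S : 'I_8 -> 'I_8 -> R) (k0 k1 : 'I_8) :
  cd_dim d -> (forall u v, S u v = S v u) ->
  (forall u v : 'I_8, (d <= u)%N -> S u v = 0) ->
  \sum_(i < 8 | (i < d)%N) \sum_(u : 'I_8) \sum_(v : 'I_8)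
    S u v * (gam R u i k0 * gam R v i k1) =
  ((k0 == k1) && (k0 < d)%N)%:R * \sum_(i < 8 | (i < d)%N) S i i.
Proof.
move=> cd_d S_sym S_out; set b := (k0 == k1) && (k0 < d)%N.
pose C (u v : 'I_8) := \sum_(i < 8 | (i < d)%N) gam R u i k0 * gam R v i k1.
have -> : \sum_(i < 8 | (i < d)%N) \sum_(u : 'I_8) \sum_(v : 'I_8)
    S u v * (gam R u i k0 * gam R v i k1) = \sum_(u : 'I_8) \sum_(v : 'I_8) S u v * C u v.
  rewrite exchange_big; apply: eq_bigr => u _; rewrite exchange_big.
  by apply: eq_bigr => v _; rewrite mulr_sumr.
(* Symmetrizing in (u, v) brings the pairs of gam_pair together. *)
have C_swap : \sum_(u : 'I_8) \sum_(v : 'I_8) S u v * C u v =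
               \sum_(u : 'I_8) \sum_(v : 'I_8) S u v * C v u.
  by rewrite exchange_big; apply: eq_bigr => u _; apply: eq_bigr => v _; rewrite S_sym.
have C_pair (u v : 'I_8) : S u v * (C u v + C v u) = 2 * ((u == v) && b)%:R * S u v.
  have [lt_ud | le_du] := ltnP u d; last by rewrite S_out // !mulr0 mul0r.
  have [lt_vd | le_dv] := ltnP v d; last by rewrite S_sym S_out // !mulr0 mul0r.
  by rewrite /C -big_split gam_pair // andbA mulrC.
have diag : \sum_(u : 'I_8) \sum_(v : 'I_8) 2 * ((u == v) && b)%:R * S u v =
            2 * (b%:R * \sum_(i < 8 | (i < d)%N) S i i).
  rewrite [in RHS]big_mkcond !mulr_sumr; apply: eq_bigr => u _.
  rewrite (bigD1 u) //= big1 ?addr0 => [|v /negPf]; last first.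
    by rewrite eq_sym => ->; rewrite mulr0 mul0r.
  by rewrite eqxx /= -mulrA; case: ltnP => // le_du; rewrite S_out // !mulr0.
suff : 2 * \sum_(u : 'I_8) \sum_(v : 'I_8) S u v * C u v =
       2 * (b%:R * \sum_(i < 8 | (i < d)%N) S i i) by lra.
rewrite -diag mulr_natl mulr2n {2}C_swap -!big_split /=; apply: eq_bigr => u _.
rewrite -big_split; apply: eq_bigr => v _ /=; by rewrite -C_pair mulrDr.
Qed.

Section TensorContraction.
Variables (R : realType) (n : nat).
Hypothesis n_ge2 : (1 < n)%N.

Local Notation mindex := {ffun 'I_n -> 'I_8}.
Implicit Types (r x y : tens R n) (I J K L : mindex) (s : {perm 'I_n}).

Definition actix s K : mindex := [ffun t => K (s t)].

Lemma actixE s K t : actix s K t = K (s t).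
Proof. exact: ffunE. Qed.

Lemma actixK s : cancel (actix s) (actix s^-1).
Proof. by move=> K; apply/ffunP => t; rewrite !ffunE permKV. Qed.

Lemma sym_actix r s K : Defs.is_sym r -> r (actix s K) = r K.
Proof. by move=> r_sym; rewrite -[in RHS](r_sym s). Qed.

Lemma sum_actix (F : mindex -> R) s : \sum_K F (actix s K) = \sum_K F K.
Proof. by rewrite [RHS](reindex_inj (can_inj (actixK s))). Qed.

Lemma tmul_tact s x y : tmul (tact s x) (tact s y) = tact s (tmul x y).
Proof.
apply: boolp.funext => K; rewrite /tmul /tact -[RHS](sum_actix _ s).
apply: eq_bigr => I _; rewrite -[RHS](sum_actix _ s); apply: eq_bigr => J _.
congr (_ * _); rewrite [LHS](reindex_inj (@perm_inj _ s)) /=.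
by apply: eq_bigr => t _; rewrite !ffunE.
Qed.

Lemma tmul_symz x y K :
  tmul x (symz y) K = (n`!%:R)^-1 * \sum_s tmul x (tact s y) K.
Proof.
rewrite /tmul /symz [in RHS]exchange_big [in RHS]mulr_sumr; apply: eq_bigr => I _.
rewrite [in RHS]exchange_big [in RHS]mulr_sumr; apply: eq_bigr => J _.
by rewrite -mulr_suml -mulr_sumr mulrCA !mulrA.
Qed.

Lemma tmul_deltanE r d K : Defs.is_sym r ->
  tmul r (deltan R n d) K =
  (n`!%:R)^-1 * \sum_s tmul r (delta0 R n d) (actix s K).
Proof.
move=> r_sym; rewrite tmul_symz; congr (_ * _); apply: eq_bigr => s _.
by rewrite -{1}(r_sym s) tmul_tact.
Qed.

Definition t0 : 'I_n := Ordinal (ltnW n_ge2).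
Definition t1 : 'I_n := Ordinal n_ge2.

Definition set01 K a b : mindex :=
  [ffun t => if t == t0 then a else if t == t1 then b else K t].

Lemma set01_t0 K a b : set01 K a b t0 = a.
Proof. by rewrite ffunE eqxx. Qed.

Lemma set01_t1 K a b : set01 K a b t1 = b.
Proof. by rewrite ffunE eqxx. Qed.

Lemma set01_other K a b t : t != t0 -> t != t1 -> set01 K a b t = K t.
Proof. by move=> /negPf t_t0 /negPf t_t1; rewrite ffunE t_t0 t_t1. Qed.

Lemma set01_set01 K a b c e : set01 (set01 K a b) c e = set01 K c e.
Proof. by apply/ffunP => t; rewrite !ffunE; case: (t == t0); case: (t == t1). Qed.

Lemma set01_swap K a b : set01 K b a = actix (tperm t0 t1) (set01 K a b).
Proof.
apply/ffunP => t; rewrite actixE.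
have [-> | t_t0] := eqVneq t t0; first by rewrite tpermL set01_t0 set01_t1.
have [-> | t_t1] := eqVneq t t1; first by rewrite tpermR set01_t1 set01_t0.
by rewrite tpermD 1?eq_sym // !set01_other.
Qed.

Lemma eq_set01 I K u v :
  (I == set01 K u v) = [&& u == I t0, v == I t1 & I == set01 K (I t0) (I t1)].
Proof.
by apply/eqP/and3P => [-> | [/eqP<- /eqP<- /eqP//]]; rewrite set01_t0 set01_t1.
Qed.

Definition unit_mindex : mindex := [ffun=> ord0].

Lemma delta0E d J :
  delta0 R n d J = \sum_(i < 8 | (i < d)%N) (J == set01 unit_mindex i i)%:R / d%:R.
Proof.
rewrite /delta0; case: ifP => [/andP[J_unit J_diag] | J_not].
  have /andP[J01 J0d] : (J t0 == J t1) && (J t0 < d)%N.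
    by move/forallP/(_ t0)/forallP/(_ t1)/implyP: J_diag; apply.
  have eJ : J = set01 unit_mindex (J t0) (J t0).
    apply/ffunP => t.
    have [-> | t_t0] := eqVneq t t0; first by rewrite set01_t0.
    have [-> | t_t1] := eqVneq t t1; first by rewrite set01_t1 (eqP J01).
    rewrite set01_other // ffunE; apply/eqP/(implyP (forallP J_unit t)).
    by move: t_t0 t_t1; rewrite -!val_eqE /=; case: (val t) => [|[|]].
  rewrite (bigD1 (J t0)) //= -eJ eqxx big1 ?addr0 ?mul1r // => i /andP[_ i_J].
  by rewrite {1}eJ; case: eqP => [/(congr1 (fun K => K t0)) | _];
    rewrite ?mul0r // !set01_t0 => e; rewrite e eqxx in i_J.
rewrite big1 // => i lt_id; case: eqP => [eJ | _]; last by rewrite mul0r.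
move/negbT: J_not => /negP[]; rewrite eJ; apply/andP; split.
  apply/forallP => t; apply/implyP => t_ge2.
  by rewrite set01_other ?ffunE // -val_eqE /= gtn_eqF // ltnW.
apply/forallP => a; apply/forallP => b; apply/implyP => /andP[/eqP a0 /eqP b1].
have -> : a = t0 by apply: val_inj.
have -> : b = t1 by apply: val_inj.
by rewrite set01_t0 set01_t1 eqxx lt_id.
Qed.

Lemma sum_delta0 d (G : mindex -> R) :
  \sum_J G J * delta0 R n d J =
  (d%:R)^-1 * \sum_(i < 8 | (i < d)%N) G (set01 unit_mindex i i).
Proof.
under eq_bigr do rewrite delta0E mulr_sumr.
rewrite exchange_big mulr_sumr; apply: eq_bigr => i _.
rewrite (bigD1 (set01 unit_mindex i i)) //= eqxx big1 ?addr0 => [|J /negPf->].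
  by rewrite mul1r mulrC.
by rewrite mul0r mulr0.
Qed.

Lemma prod_gam_set01 I K i :
  \prod_(t < n) gam R (I t) (set01 unit_mindex i i t) (K t) =
  gam R (I t0) i (K t0) * gam R (I t1) i (K t1) * (I == set01 K (I t0) (I t1))%:R.
Proof.
rewrite (bigD1 t0) // (bigD1 t1) //= !set01_t0 set01_t1 mulrA; congr (_ * _).
transitivity (\prod_(t < n | (t != t0) && (t != t1)) ((I t == K t)%:R : R)).
  by apply: eq_bigr => t /andP[t_t0 t_t1]; rewrite set01_other // ffunE gam_unitr.
have [eI | neI] := eqVneq I (set01 K (I t0) (I t1)).
  by apply: big1 => t /andP[t_t0 t_t1]; rewrite {1}eI set01_other // eqxx.
have /existsP[t It] : [exists t, I t != set01 K (I t0) (I t1) t].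
  apply: contraNT neI; rewrite negb_exists => /forallP I_eq.
  by apply/eqP/ffunP => t; apply/eqP/negPn.
have t_t0 : t != t0 by apply: contraNneq It => ->; rewrite set01_t0.
have t_t1 : t != t1 by apply: contraNneq It => ->; rewrite set01_t1.
by rewrite (bigD1 t) /= ?t_t0 // set01_other // in It *; rewrite (negPf It) mul0r.
Qed.

Lemma sum_set01 K (F : mindex -> R) :
  \sum_(I : mindex) (I == set01 K (I t0) (I t1))%:R * F I =
  \sum_(u : 'I_8) \sum_(v : 'I_8) F (set01 K u v).
Proof.
transitivity (\sum_(I : mindex) \sum_(u : 'I_8) \sum_(v : 'I_8)
                (I == set01 K u v)%:R * F (set01 K u v)).
  apply: eq_bigr => I _.
  rewrite (bigD1 (I t0)) //= [X in _ + X]big1 ?addr0 => [|u /negPf u_I]; last first.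
    by apply: big1 => v _; rewrite eq_set01 u_I mul0r.
  rewrite (bigD1 (I t1)) //= [X in _ + X]big1 ?addr0 => [|v /negPf v_I]; last first.
    by rewrite eq_set01 v_I andbF mul0r.
  by rewrite eq_set01 !eqxx /=; case: eqP => [<- | _]; rewrite ?mul0r.
rewrite exchange_big; apply: eq_bigr => u _; rewrite exchange_big; apply: eq_bigr => v _.
by rewrite (bigD1 (set01 K u v)) //= eqxx mul1r big1 ?addr0 // => I /negPf->; rewrite mul0r.
Qed.

Lemma tmul_delta0_expand r d K :
  tmul r (delta0 R n d) K = (d%:R)^-1 * \sum_(i < 8 | (i < d)%N)
    \sum_(u : 'I_8) \sum_(v : 'I_8) r (set01 K u v) * (gam R u i (K t0) * gam R v i (K t1)).
Proof.
transitivity (\sum_(I : mindex) (d%:R)^-1 * \sum_(i < 8 | (i < d)%N)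
    r I * \prod_(t < n) gam R (I t) (set01 unit_mindex i i t) (K t)).
  apply: eq_bigr => I _; rewrite -(sum_delta0 d (fun J => r I * \prod_t gam R (I t) (J t) (K t))).
  by apply: eq_bigr => J _; rewrite mulrAC.
rewrite -mulr_sumr exchange_big; congr (_ * _); apply: eq_bigr => i _.
transitivity (\sum_(I : mindex) (I == set01 K (I t0) (I t1))%:R *
                      (r I * (gam R (I t0) i (K t0) * gam R (I t1) i (K t1)))).
  by apply: eq_bigr => I _; rewrite prod_gam_set01 mulrA mulrC.
rewrite sum_set01; apply: eq_bigr => u _; apply: eq_bigr => v _.
by rewrite set01_t0 set01_t1.
Qed.

Definition contract01 r d K := \sum_(i < 8 | (i < d)%N) r (set01 K i i).

Lemma tmul_delta0E r d K : cd_dim d -> Defs.is_sym r -> supported d r ->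
  tmul r (delta0 R n d) K =
  (d%:R)^-1 * ((K t0 == K t1) && (K t0 < d)%N)%:R * contract01 r d K.
Proof.
move=> cd_d r_sym r_supp; rewrite tmul_delta0_expand contract_gam_pair ?mulrA //.
  by move=> u v; rewrite set01_swap sym_actix.
by move=> u v le_du; apply: r_supp; exists t0; rewrite set01_t0.
Qed.

Lemma sym_count r K K' : Defs.is_sym r ->
  (forall v, #|[pred t | K t == v]| = #|[pred t | K' t == v]|) -> r K = r K'.
Proof.
move=> r_sym K_K'.
have /tuple_permP[s /val_inj Ks] : perm_eq [tuple K' t | t < n] [tuple K t | t < n].
  apply/allP => v _; apply/eqP; rewrite /= !count_map -!size_filter -!cardE.
  exact: esym (K_K' v).
have -> : K' = actix s K.
  by apply/ffunP => t; rewrite actixE -[K' t](tnth_mktuple K') Ks !tnth_mktuple.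
by rewrite sym_actix.
Qed.

Lemma card_actix (P : pred 'I_8) s K :
  #|[pred t | P (actix s K t)]| = #|[pred t | P (K t)]|.
Proof.
rewrite -(card_image (@perm_inj _ s) [pred t | P (actix s K t)]); apply: eq_card => t.
by rewrite -{1}(permKV s t) mem_image ?inE ?actixE ?permKV //; exact: perm_inj.
Qed.

Lemma card_set01 (P : pred 'I_8) K a b :
  (#|[pred t | P (set01 K a b t)]| + P (K t0) + P (K t1) =
   #|[pred t | P (K t)]| + P a + P b)%N.
Proof.
rewrite (cardD1 t0) (cardD1 t1) [in RHS](cardD1 t0) [in RHS](cardD1 t1) !inE.
rewrite set01_t0 set01_t1 /=.
have -> : #|[predD1 [predD1 [pred t | P (set01 K a b t)] & t0] & t1]| =
          #|[predD1 [predD1 [pred t | P (K t)] & t0] & t1]|.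
  apply: eq_card => t; rewrite !inE.
  by case: eqP => // /eqP t_t1; case: eqP => // /eqP t_t0; rewrite set01_other.
ring.
Qed.

Lemma contract01_set01 r d K a b : contract01 r d (set01 K a b) = contract01 r d K.
Proof. by apply: eq_bigr => i _; rewrite set01_set01. Qed.

Lemma contract01_actix r d s K : Defs.is_sym r -> K (s t0) = K t0 -> K (s t1) = K t1 ->
  contract01 r d (actix s K) = contract01 r d K.
Proof.
move=> r_sym Ks0 Ks1; apply: eq_bigr => i _; apply: sym_count => // v.
have := card_set01 (fun e => e == v) (actix s K) i i.
have := card_set01 (fun e => e == v) K i i.
rewrite (card_actix (fun e => e == v)) !actixE Ks0 Ks1.
lia.
Qed.

Lemma contract01_eq0 r d ds : cd_dim d -> Defs.is_sym r -> supported d r ->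
  supported ds (tmul r (deltan R n d)) -> (ds < d)%N -> forall K, contract01 r d K = 0.
Proof.
move=> cd_d r_sym r_supp x_supp lt_ds_d.
have lt_ds8 : (ds < 8)%N := leq_trans lt_ds_d (cd_dim_le8 _ cd_d).
pose w : 'I_8 := inord ds.
have w_ds : nat_of_ord w = ds by rewrite inordK.
suff contract01_ww m L :
    #|[pred t | L t != w]| = m -> L t0 = w -> L t1 = w -> contract01 r d L = 0.
  move=> K; rewrite -(contract01_set01 r d K w w).
  by apply: (contract01_ww _ _ erefl); rewrite ?set01_t0 ?set01_t1.
elim/ltn_ind: m L => m IH L Lm L0 L1.
have term s : tmul r (delta0 R n d) (actix s L) =
    (d%:R)^-1 * contract01 r d L * ((L (s t0) == w) && (L (s t1) == w))%:R.
  rewrite tmul_delta0E // !actixE.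
  have [e0 | ne0] := eqVneq (L (s t0)) w.
    have [e1 | ne1] := eqVneq (L (s t1)) w; last first.
      by rewrite e0 eq_sym (negPf ne1) /= !(mulr0, mul0r).
    by rewrite e0 e1 eqxx w_ds lt_ds_d contract01_actix ?e0 ?e1 ?L0 ?L1 //= !mulr1.
  rewrite /= mulr0.
  have [e01 | ne01] := eqVneq (L (s t0)) (L (s t1)); last by rewrite /= mulr0 mul0r.
  have lt_m : (#|[pred t | set01 (actix s L) w w t != w]| < m)%N.
    have := card_set01 (fun e => e != w) (actix s L) w w.
    rewrite (card_actix (fun e => e != w)) !actixE -e01 ne0 eqxx Lm /=.
    lia.
  by rewrite -(contract01_set01 r d (actix s L) w w) (IH _ lt_m _ erefl)
       ?mulr0 ?set01_t0 ?set01_t1.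
have count_pos : 0 < \sum_(s : {perm 'I_n}) (((L (s t0) == w) && (L (s t1) == w))%:R : R).
  rewrite (bigD1 1%g) //= !perm1 L0 L1 eqxx ltr_pwDl ?ltr01 //.
  by apply: sumr_ge0 => s _; exact: ler0n.
have : tmul r (deltan R n d) L = 0 by apply: x_supp; exists t0; rewrite L0 /= w_ds.
rewrite tmul_deltanE // (eq_bigr _ (fun s _ => term s)) -mulr_sumr => /eqP.
rewrite !mulf_eq0 !invr_eq0 !pnatr_eq0 (gt_eqF count_pos).
rewrite gtn_eqF ?fact_gt0 // gtn_eqF ?cd_dim_gt0 //=.
by rewrite orbF => /eqP.
Qed.

Lemma tmul_deltan_eq0 r d ds : cd_dim d -> Defs.is_sym r -> supported d r ->
  supported ds (tmul r (deltan R n d)) -> (ds < d)%N ->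
  tmul r (deltan R n d) = (fun _ => 0).
Proof.
move=> cd_d r_sym r_supp x_supp lt_ds_d; apply: boolp.funext => K.
rewrite tmul_deltanE // big1 ?mulr0 // => s _.
by rewrite tmul_delta0E // (contract01_eq0 cd_d r_sym r_supp x_supp lt_ds_d) mulr0.
Qed.

End TensorContraction.

Theorem lemma2p7 (R : realType) (n : nat) (hn : (2 <= n)%N) :
  (forall x : tens R n, SymA 2 x ->
     (exists r : tens R n, SymA 4 r /\ x = tmul r (deltan R n 4)) -> x = (fun _ => 0))
  /\
  (forall x : tens R n, SymA 4 x ->
     (exists r : tens R n, SymA 8 r /\ x = tmul r (deltan R n 8)) -> x = (fun _ => 0)).
Proof.
by split=> x [_ x_supp] [r [[r_sym r_supp] x_def]]; rewrite x_def in x_supp *;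
  apply: (tmul_deltan_eq0 hn _ r_sym r_supp x_supp).
Qed.
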